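(* The space $X_{\mathrm{crs}}$ is not regular: the origin $x$ and the closed set $A=\bigcup_{n\ge1} e_n^0$ (which does not contain $x$) cannot be separated by disjoint open sets; indeed every open neighborhood of $x$ meets every open neighborhood of $A$.
   Context: Let $X$ be the following 2-dimensional CW-complex. Its 0-cells are $e_n^0$, $n\ge 0$; the point $x=e_0^0$ is called the origin. For each $n\ge1$ there are two 1-cells $e_n^1, e_{-n}^1$, each joining $x$ to $e_n^0$, so that $e_0^0\cup e_n^0\cup e_n^1\cup e_{-n}^1$ is homeomorphic to a circle; for each $n\ge1$ a 2-cell $e_n^2$ is attached via a homeomorphism $\varphi_n:S^1\to e_0^0\cup e_n^0\cup e_n^1\cup e_{-n}^1$. Thus each closed 2-cell $\overline{e_n^2}$ is a closed disk having $x$ and $e_n^0$ on its boundary, and $X$ is a wedge at $x$ of countably many closed disks, carrying the CW (weak) topology. The coarser topology on the set $X$ consists of all subsets $U\subset X$ that are open in the CW-topology and either do not contain $x$, or contain $\overline{e_n^2}\smallsetminus e_n^0$ for all but finitely many $n\ge1$. The set $X$ with this coarser topology is denoted $X_{\mathrm{crs}}$. *)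

From Stdlib Require Import Reals.
Open Scope R_scope.

(* The closed unit disk D in R^2; every closed 2-cell of X is a copy of D.
   In the n-th copy, the boundary point (-1,0) is the origin x = e_0^0,
   (1,0) is the 0-cell e_n^0, and the open upper / lower semicircles are
   the 1-cells e_n^1, e_{-n}^1. *)
Definition inD (p : R * R) : Prop := fst p ^ 2 + snd p ^ 2 <= 1.
Definition base : R * R := (-1, 0).
Definition tip  : R * R := (1, 0).

(* Points of X: None = origin x; Some (n, p) = point p of the n-th disk (n >= 1),
   p different from base. *)
Definition validX (q : option (nat * (R * R))) : Prop :=
  match q with
  | None => True
  | Some (n, p) => (1 <= n)%nat /\ inD p /\ p <> base
  end.
Definition X : Type := { q : option (nat * (R * R)) | validX q }.

Definition origin : X := exist validX None I.

Definition pair_dec (p q : R * R) : {p = q} + {p <> q}.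
Proof.
  destruct p as [a b], q as [c d].
  destruct (Req_EM_T a c) as [H1|H1]; [destruct (Req_EM_T b d) as [H2|H2]|].
  - left; subst; reflexivity.
  - right; intro H; inversion H; contradiction.
  - right; intro H; inversion H; contradiction.
Defined.

Definition charmap (n : nat) (Hn : (1 <= n)%nat) (p : R * R) (Hp : inD p) : X :=
  match pair_dec p base with
  | left _ => origin
  | right H => exist validX (Some (n, p)) (conj Hn (conj Hp H))
  end.

Definition sqdist (p q : R * R) : R := (fst q - fst p) ^ 2 + (snd q - snd p) ^ 2.

(* Since every closed cell lies in some closed 2-cell, this is the weak topology. *)
Definition open_cw (U : X -> Prop) : Prop :=
  forall (n : nat) (Hn : (1 <= n)%nat) (p : R * R) (Hp : inD p),
    U (charmap n Hn p Hp) ->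
    exists eps : R, 0 < eps /\
      forall (q : R * R) (Hq : inD q), sqdist p q < eps ^ 2 -> U (charmap n Hn q Hq).

Definition open_crs (U : X -> Prop) : Prop :=
  open_cw U /\
  (~ U origin \/
   exists N : nat, forall (n : nat) (Hn : (1 <= n)%nat), (N <= n)%nat ->
     forall (p : R * R) (Hp : inD p), p <> tip -> U (charmap n Hn p Hp)).

Definition closed_crs (C : X -> Prop) : Prop := open_crs (fun y => ~ C y).

Definition A_set (y : X) : Prop := exists n : nat, proj1_sig y = Some (n, tip).

Definition regular_space (T : Type) (opn : (T -> Prop) -> Prop) : Prop :=
  forall (C : T -> Prop) (x : T), opn (fun y => ~ C y) -> ~ C x ->
    exists U V : T -> Prop, opn U /\ opn V /\ U x /\ (forall y, C y -> V y) /\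
      (forall y, ~ (U y /\ V y)).

(* The whole argument takes place in the characteristic maps of the closed
   2-cells, i.e. in the closed unit disk D, where the 0-cell e_n^0 is the point
   tip = (1,0).
   - A is closed in X_crs: its preimage in every disk is the single point tip,
     whose complement is open in D; and since the complement of A contains the
     origin, the cofiniteness condition holds because every point of the
     n-th disk other than tip already lies outside A.
   - A neighbourhood U of the origin contains, for all large n, the whole
     n-th disk minus tip; a neighbourhood V of A contains a small disk around
     tip in every disk.  Hence both contain the points (1 - t, 0) of the n-th
     disk for small t > 0, so U and V meet.
   - A space with a closed set and an outside point that cannot be separated
     is not regular, which is a purely formal last step. *)

From Stdlib Require Import Reals Lra Psatz.
Open Scope R_scope.

Lemma not_regular_of_inseparable (T : Type) (opn : (T -> Prop) -> Prop)
    (C : T -> Prop) (x : T) :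
  opn (fun y => ~ C y) -> ~ C x ->
  (forall U V : T -> Prop, opn U -> opn V -> U x -> (forall y, C y -> V y) ->
     exists y, U y /\ V y) ->
  ~ regular_space T opn.
Proof.
  intros HC Hx Hinsep Hreg.
  destruct (Hreg C x HC Hx) as [U [V [HU [HV [Ux [HCV Hdisj]]]]]].
  destruct (Hinsep U V HU HV Ux HCV) as [y Hy].
  exact (Hdisj y Hy).
Qed.

Lemma tip_in_disk : inD tip.
Proof. unfold inD, tip; simpl; lra. Qed.

Lemma tip_neq_base : tip <> base.
Proof. unfold tip, base; intro E; inversion E; lra. Qed.

Lemma sqdist_pos (p q : R * R) : p <> q -> 0 < sqdist p q.
Proof.
  destruct p as [a b], q as [c d]; unfold sqdist; simpl; intro Hpq.
  pose proof (pow2_ge_0 (c - a)); pose proof (pow2_ge_0 (d - b)).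
  destruct (Req_EM_T a c) as [<-|Hac].
  - assert (Hbd : d - b <> 0) by (intro E; apply Hpq; f_equal; lra).
    assert (0 < (d - b) ^ 2) by (rewrite <- Rsqr_pow2; exact (Rsqr_pos_lt _ Hbd)).
    lra.
  - assert (Hca : c - a <> 0) by (intro E; apply Hac; lra).
    assert (0 < (c - a) ^ 2) by (rewrite <- Rsqr_pow2; exact (Rsqr_pos_lt _ Hca)).
    lra.
Qed.

Lemma radius_below (d : R) : 0 < d -> exists eps, 0 < eps /\ eps ^ 2 <= d.
Proof.
  intro Hd. exists (Rmin 1 d).
  pose proof (Rmin_l 1 d); pose proof (Rmin_r 1 d).
  assert (0 < Rmin 1 d) by (apply Rmin_glb_lt; lra).
  split; [lra | nra].
Qed.

Lemma approach_in_disk (t : R) : 0 < t < 1 -> inD (1 - t, 0).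
Proof. intro Ht; unfold inD; simpl; nra. Qed.

Lemma approach_neq_tip (t : R) : 0 < t -> (1 - t, 0) <> tip.
Proof. intros Ht E; inversion E; lra. Qed.

Lemma sqdist_approach (t : R) : sqdist tip (1 - t, 0) = t ^ 2.
Proof. unfold sqdist, tip; simpl; ring. Qed.

Lemma origin_notin_A : ~ A_set origin.
Proof. intros [m Hm]; discriminate. Qed.

Lemma charmap_tip_in_A (n : nat) (Hn : (1 <= n)%nat) (Ht : inD tip) :
  A_set (charmap n Hn tip Ht).
Proof.
  unfold charmap; destruct (pair_dec tip base) as [E|Hne].
  - exfalso; exact (tip_neq_base E).
  - exists n; reflexivity.
Qed.

Lemma charmap_in_A (n : nat) (Hn : (1 <= n)%nat) (p : R * R) (Hp : inD p) :
  A_set (charmap n Hn p Hp) -> p = tip.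
Proof.
  unfold charmap, A_set; destruct (pair_dec p base) as [Hbase|Hbase]; simpl.
  - intros [m H]; discriminate.
  - intros [m H]; inversion H; reflexivity.
Qed.

Lemma A_closed : closed_crs A_set.
Proof.
  split.
  - intros n Hn p Hp HpA.
    assert (Hpt : p <> tip).
    { intros ->; apply HpA, charmap_tip_in_A. }
    destruct (radius_below (sqdist p tip) (sqdist_pos p tip Hpt))
      as [eps [Heps Hle]].
    exists eps; split; [exact Heps|].
    intros q Hq Hpq HqA; apply charmap_in_A in HqA; subst q; lra.
  - right; exists 0%nat; intros n Hn _ p Hp Hpt HA.
    exact (Hpt (charmap_in_A n Hn p Hp HA)).
Qed.

Lemma origin_A_inseparable (U V : X -> Prop) :
  open_crs U -> open_crs V -> U origin -> (forall y, A_set y -> V y) ->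
  exists y, U y /\ V y.
Proof.
  intros [_ [HU | [N HN]]] [HVcw _] Uo HAV; [contradiction|].
  set (n := Nat.max N 1).
  assert (Hn : (1 <= n)%nat) by apply Nat.le_max_r.
  assert (HNn : (N <= n)%nat) by apply Nat.le_max_l.
  (* V contains a disk of radius eps around tip in the n-th closed 2-cell. *)
  destruct (HVcw n Hn tip tip_in_disk (HAV _ (charmap_tip_in_A n Hn _)))
    as [eps [Heps Hball]].
  set (t := Rmin 1 eps / 2).
  assert (Ht : 0 < t < 1 /\ t < eps).
  { pose proof (Rmin_l 1 eps); pose proof (Rmin_r 1 eps).
    assert (0 < Rmin 1 eps) by (apply Rmin_glb_lt; lra).
    unfold t; lra. }
  exists (charmap n Hn (1 - t, 0) (approach_in_disk t (proj1 Ht))); split.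
  - apply HN; [exact HNn | apply approach_neq_tip; lra].
  - apply Hball; rewrite sqdist_approach; nra.
Qed.

Theorem mainTheorem3 :
  closed_crs A_set /\ ~ A_set origin /\
  (forall U V : X -> Prop, open_crs U -> open_crs V -> U origin ->
     (forall y, A_set y -> V y) -> exists y, U y /\ V y) /\
  ~ regular_space X open_crs.
Proof.
  split; [exact A_closed|].
  split; [exact origin_notin_A|].
  split; [exact origin_A_inseparable|].
  exact (not_regular_of_inseparable X open_crs A_set origin
           A_closed origin_notin_A origin_A_inseparable).
Qed.
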